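(* For every $m\ge 1$ and every $m$-by-$2m$ disjoint matrix $M$, there are pairwise incomparable strings $\sigma_0,\tau_0,\dots,\sigma_{m-1},\tau_{m-1}$ such that $\sigma_i$ and $\tau_i$ are entries of the row $M(i)$ for every $i<m$.
   Context: Strings are finite binary strings, and $\preceq$ is the prefix relation. Two strings are incomparable if neither is a prefix of the other. An $m$-by-$n$ matrix $M$ is an array of strings $\sigma_{i,j}\in 2^{<\omega}$ for $i<m$ and $j<n$. Its $i$th row $M(i)$ is the tuple $(\sigma_{i,0},\dots,\sigma_{i,n-1})$. The matrix $M$ is disjoint if, for each $i<m$, the strings $\sigma_{i,0},\dots,\sigma_{i,n-1}$ are pairwise incomparable. *)

From mathcomp Require Import all_boot.
Set Implicit Arguments. Unset Strict Implicit. Unset Printing Implicit Defensive.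

Definition bstring := seq bool.

Definition prefixb (s t : bstring) : bool := prefix s t.

Definition incomparable (s t : bstring) : bool := ~~ prefixb s t && ~~ prefixb t s.

Definition strmatrix (m n : nat) := 'I_m -> 'I_n -> bstring.

Definition disjoint_matrix (m n : nat) (M : strmatrix m n) : Prop :=
  forall (i : 'I_m) (j k : 'I_n), j != k -> incomparable (M i j) (M i k).

From mathcomp Require Import all_boot zify.
Set Implicit Arguments. Unset Strict Implicit. Unset Printing Implicit Defensive.

(* Pick, among all rows, two distinct entries x, y of one row i whose longest
   common prefix v is as long as possible, and use them as sigma_i, tau_i.  An
   entry of another row that is comparable with x or y is comparable with v, so
   it is a prefix of v or extends v0 or v1 (v followed by one bit).  By
   maximality of v each row has at most one entry extending v0 and one
   extending v1, and an entry below v excludes both; so each other row loses at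
   most two entries, and induction on the number of rows applies to the m - 1
   remaining rows with 2m - 2 entries. *)

Fixpoint lcp (s t : bstring) : bstring :=
  match s, t with
  | a :: s', b :: t' => if a == b then a :: lcp s' t' else [::]
  | _, _ => [::]
  end.

Lemma lcp_prefixl s t : prefix (lcp s t) s.
Proof. by elim: s t => [|a s IH] [|b t] //=; case: eqP => //= _; rewrite eqxx IH. Qed.

Lemma lcp_prefixr s t : prefix (lcp s t) t.
Proof. by elim: s t => [|a s IH] [|b t] //=; case: eqP => //= ->; rewrite eqxx IH. Qed.

Lemma prefix_lcp u s t : prefix u s -> prefix u t -> prefix u (lcp s t).
Proof.
elim: s u t => [|a s IH] [|x u] [|b t] //=; rewrite ?prefix0s //.
by move=> /andP[/eqP <- us] /andP[/eqP <- ut]; rewrite eqxx /= eqxx IH.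
Qed.

Definition comparable (s t : bstring) : bool := prefix s t || prefix t s.

Lemma incomparableE s t : incomparable s t = ~~ comparable s t.
Proof. by rewrite /incomparable /comparable negb_or. Qed.

Lemma incomparable_sym s t : incomparable s t = incomparable t s.
Proof. by rewrite /incomparable andbC. Qed.

Lemma prefixes_comparable s t u : prefix s u -> prefix t u -> comparable s t.
Proof.
elim: s t u => [|a s IH] [|b t] [|c u] //=; rewrite /comparable ?prefix0s ?orbT //.
by move=> /andP[/eqP -> su] /andP[/eqP -> tu]; rewrite /= eqxx; apply: IH su tu.
Qed.

Lemma comparable_prefix v x z : prefix v x -> comparable z x -> comparable z v.
Proof.
move=> vx /orP[zx | xz]; first exact: prefixes_comparable zx vx.
by rewrite /comparable (prefix_trans vx xz) orbT.
Qed.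

Lemma prefix_comparable_trans z v w : prefix z v -> comparable w v -> comparable z w.
Proof.
move=> zv /orP[wv | vw]; first exact: prefixes_comparable zv wv.
by rewrite /comparable (prefix_trans zv vw).
Qed.

Lemma prefix_rcons_nth v z : prefix v z -> ~~ prefix z v ->
  prefix (rcons v (nth false z (size v))) z.
Proof.
case/prefixP=> [[|a w] ->]; first by rewrite cats0 prefix_refl.
by rewrite nth_cat ltnn subnn -cat_rcons prefix_prefix.
Qed.

Section Selection.

Variables (I J : finType) (R : I -> J -> bstring).

Definition antichain (f : J -> bstring) (A : {set J}) : Prop :=
  {in A &, forall j k, j != k -> incomparable (f j) (f k)}.

Lemma antichainS f (A B : {set J}) : B \subset A -> antichain f A -> antichain f B.
Proof. by move=> /subsetP BA antiA j k /BA jA /BA kA; apply: antiA. Qed.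

Lemma card_comparable_le2 (f : J -> bstring) (A : {set J}) (v : bstring) :
  antichain f A ->
  (forall c : bool, {in A &, forall j k,
     prefix (rcons v c) (f j) -> prefix (rcons v c) (f k) -> j = k}) ->
  #|[set j in A | comparable (f j) v]| <= 2.
Proof.
move=> antiA cone_uniq; set B := [set j in A | _].
have cone : forall j k, j \in B -> k \in B -> j != k ->
    prefix (rcons v (nth false (f j) (size v))) (f j).
  move=> j k; rewrite !inE => /andP[jA jv] /andP[kA kv] njk.
  have fjk := antiA j k jA kA njk; rewrite incomparableE in fjk.
  have nfjv : ~~ prefix (f j) v.
    by apply: contra fjk => fjv; apply: prefix_comparable_trans fjv kv.
  have vfj : prefix v (f j) by case/orP: jv => // fjv; rewrite fjv in nfjv.
  exact: prefix_rcons_nth vfj nfjv.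
rewrite -(@card_in_imset _ _ (fun j => nth false (f j) (size v))).
  by rewrite (leq_trans (max_card _)) ?card_bool.
move=> j k jB kB ejk; have [//|njk] := eqVneq j k.
have jA : j \in A by move: jB; rewrite inE => /andP[].
have kA : k \in A by move: kB; rewrite inE => /andP[].
apply: (cone_uniq _ j k jA kA (cone j k jB kB njk)).
by rewrite ejk (cone k j) // eq_sym.
Qed.

Lemma exists_deepest_split (S : {set I}) (A : I -> {set J}) (i0 : I) (j0 k0 : J) :
  i0 \in S -> j0 \in A i0 -> k0 \in A i0 -> j0 != k0 ->
  exists i j k, [/\ i \in S, j \in A i, k \in A i, j != k &
    forall r c, r \in S -> {in A r &, forall j' k',
      prefix (rcons (lcp (R i j) (R i k)) c) (R r j') ->
      prefix (rcons (lcp (R i j) (R i k)) c) (R r k') -> j' = k'}].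
Proof.
move=> i0S j0A k0A nj0k0.
pose P := [pred t : I * J * J |
  [&& t.1.1 \in S, t.1.2 \in A t.1.1, t.2 \in A t.1.1 & t.1.2 != t.2]].
pose depth (t : I * J * J) := size (lcp (R t.1.1 t.1.2) (R t.1.1 t.2)).
have P0 : P (i0, j0, k0) by rewrite /= i0S j0A k0A.
case: (arg_maxnP depth P0) => [[[i j] k]] /and4P[iS jA kA njk] deepest.
exists i, j, k; split=> // r c rS j' k' j'A k'A vj' vk'.
have [//|nj'k'] := eqVneq j' k'.
have := deepest (r, j', k'); rewrite /= rS j'A k'A nj'k' => /(_ isT).
have := size_prefix (prefix_lcp vj' vk'); rewrite size_rcons /depth /=.
by move=> h1 h2; have := leq_trans h1 h2; rewrite ltnn.
Qed.

Definition incomparable_selection (S : {set I}) (A : I -> {set J})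
    (c : I -> bool -> J) : Prop :=
  (forall r b, r \in S -> c r b \in A r) /\
  forall p q : I * bool, p.1 \in S -> q.1 \in S -> p != q ->
    incomparable (R p.1 (c p.1 p.2)) (R q.1 (c q.1 q.2)).

Lemma incomparable_selection_extend (S : {set I}) (A : I -> {set J}) i j k c :
  i \in S -> j \in A i -> k \in A i -> incomparable (R i j) (R i k) ->
  incomparable_selection (S :\ i) (fun r =>
    [set l in A r | incomparable (R r l) (R i j) && incomparable (R r l) (R i k)]) c ->
  incomparable_selection S A (fun r b => if r == i then (if b then k else j) else c r b).
Proof.
move=> iS jA kA ijk [cA cinc].
have out r b : r \in S -> r != i ->
    [/\ c r b \in A r, incomparable (R r (c r b)) (R i j)
      & incomparable (R r (c r b)) (R i k)].
  by move=> rS ri; have := cA r b; rewrite !inE ri rS => /(_ isT) /and3P[].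
split=> [r b rS | [p b] [q b'] /= pS qS].
  by case: eqVneq => [->|ri]; [case: b | have [] := out r b rS ri].
rewrite xpair_eqE.
case: (eqVneq p i) => [->|pi]; case: (eqVneq q i) => [->|qi] /=.
- by case: b b' => [] [] //= _; rewrite incomparable_sym.
- by have [_ qj qk] := out q b' qS qi; case: b; rewrite incomparable_sym.
- by have [_ pj pk] := out p b pS pi; case: b'.
- by move=> npq; apply: (cinc (p, b) (q, b')); rewrite /= ?in_setD1 ?pi ?qi.
Qed.

(* [j0] is only a dummy value for the rows outside [S]. *)
Lemma exists_incomparable_selection (j0 : J) (S : {set I}) (A : I -> {set J}) :
  {in S, forall r, antichain (R r) (A r)} ->
  {in S, forall r, 2 * #|S| <= #|A r|} ->
  exists c, incomparable_selection S A c.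
Proof.
move eS : #|S| => n; elim: n S A eS => [|n IH] S A eS antiA bigA.
  by exists (fun _ _ => j0); split=> [r b|[r b] q]; rewrite (cards0_eq eS) inE.
have [i0 i0S] : exists i0, i0 \in S by apply/card_gt0P; rewrite eS.
have [j1 [k1 [j1A k1A nj1k1]]] : exists j k, [/\ j \in A i0, k \in A i0 & j != k].
  by apply/card_gt1P; apply: leq_trans (bigA _ i0S); lia.
have [i [j [k [iS jA kA njk deep]]]] := exists_deepest_split i0S j1A k1A nj1k1.
set v := lcp (R i j) (R i k).
pose A' r :=
  [set l in A r | incomparable (R r l) (R i j) && incomparable (R r l) (R i k)].
have [c cS] : exists c, incomparable_selection (S :\ i) A' c.
  have eS' : #|S :\ i| = n by move: eS; rewrite (cardsD1 i) iS; case.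
  apply: IH => // r; rewrite in_setD1 => /andP[_ rS].
    by apply: antichainS (antiA r rS); apply/subsetP => l; rewrite inE => /andP[].
  have lost : A r \subset A' r :|: [set l in A r | comparable (R r l) v].
    apply/subsetP => l lA; rewrite !inE lA /= !incomparableE -negb_or -implybE.
    by apply/implyP; case/orP; apply: comparable_prefix;
      [exact: lcp_prefixl | exact: lcp_prefixr].
  have := leq_trans (subset_leq_card lost) (leq_card_setU _ _).
  have := card_comparable_le2 (antiA r rS) (fun c => deep r c rS); rewrite -/v.
  have := bigA r rS; lia.
exists (fun r b => if r == i then (if b then k else j) else c r b).
exact: incomparable_selection_extend iS jA kA (antiA i iS j k jA kA njk) cS.
Qed.

End Selection.

Theorem mainTheorem3 (m : nat) (hm : 1 <= m) (M : strmatrix m (2 * m)) :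
  disjoint_matrix M ->
  exists c : 'I_m -> bool -> 'I_(2 * m),
    forall p q : 'I_m * bool, p != q ->
      incomparable (M p.1 (c p.1 p.2)) (M q.1 (c q.1 q.2)).
Proof.
move=> dM; have j0 : 'I_(2 * m) by exists 0; rewrite muln_gt0 hm.
have rows_antichain : {in setT, forall i, antichain (M i) setT}.
  by move=> i _ j k _ _; apply: dM.
have rows_large : {in [set: 'I_m], forall i, 2 * #|[set: 'I_m]| <= #|[set: 'I_(2 * m)]|}.
  by move=> i _; rewrite !cardsT !card_ord.
have [c [_ cinc]] := exists_incomparable_selection j0 rows_antichain rows_large.
by exists c => p q; apply: cinc; rewrite inE.
Qed.
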